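(* Consider on $\mathcal D=[0,+\infty)^3$ the system $$\dot E=\beta_E F\Big(1-\frac{E}{K}\Big)-(\nu_E+\delta_E)E,\qquad \dot M=(1-\nu)\nu_E E-\delta_M M,\qquad \dot F=\nu\nu_E E-\delta_F F .$$ If $\mathcal R_0\le 1$, then the equilibrium $\mathbf 0=(0,0,0)^T$ is globally asymptotically stable in $\mathcal D$ for this system.
   Context: Parameters: $\beta_E,\nu_E,\delta_E,\delta_M,\delta_F,K>0$ and $\nu\in(0,1)$. The basic offspring number is $\mathcal R_0:=\dfrac{\beta_E\nu\nu_E}{\delta_F(\nu_E+\delta_E)}$. The set $\mathcal D$ is positively invariant and solutions starting in $\mathcal D$ are defined for all $t\ge0$. An equilibrium $x_e\in\mathcal D$ is stable in $\mathcal D$ if for every $\varepsilon>0$ there is $\delta>0$ such that every solution with $x(0)\in\mathcal D$, $\|x(0)-x_e\|<\delta$ satisfies $\|x(t)-x_e\|<\varepsilon$ for all $t>0$; it is a global attractor in $\mathcal D$ if every solution with $x(0)\in\mathcal D$ satisfies $x(t)\to x_e$ as $t\to\infty$; it is globally asymptotically stable in $\mathcal D$ if it is both stable and a global attractor in $\mathcal D$. *)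

From Stdlib Require Import Reals.
Open Scope R_scope.

Definition basic_offspring (bE nuE dE dF nu : R) : R :=
  bE * nu * nuE / (dF * (nuE + dE)).

Definition norm3 (a b c : R) : R := sqrt (a * a + b * b + c * c).

Definition inD (a b c : R) : Prop := 0 <= a /\ 0 <= b /\ 0 <= c.

Definition right_cont0 (f : R -> R) : Prop :=
  forall eps, 0 < eps -> exists d, 0 < d /\
    forall t, 0 <= t < d -> Rabs (f t - f 0) < eps.

(* (E,M,F) is a solution of the system on [0,+oo): continuous at t = 0
   (from the right) and satisfying the ODE at every t > 0.  Values at
   t < 0 are irrelevant. *)
Definition is_solution (bE nuE dE dM dF K nu : R) (E M F : R -> R) : Prop :=
  (forall t, 0 < t ->
     derivable_pt_lim E t (bE * F t * (1 - E t / K) - (nuE + dE) * E t) /\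
     derivable_pt_lim M t ((1 - nu) * nuE * E t - dM * M t) /\
     derivable_pt_lim F t (nu * nuE * E t - dF * F t)) /\
  right_cont0 E /\ right_cont0 M /\ right_cont0 F.

Definition stable0_in_D (bE nuE dE dM dF K nu : R) : Prop :=
  forall eps, 0 < eps -> exists delta, 0 < delta /\
    forall E M F : R -> R,
      is_solution bE nuE dE dM dF K nu E M F ->
      inD (E 0) (M 0) (F 0) ->
      norm3 (E 0) (M 0) (F 0) < delta ->
      forall t, 0 < t -> norm3 (E t) (M t) (F t) < eps.

Definition attractor0_in_D (bE nuE dE dM dF K nu : R) : Prop :=
  forall E M F : R -> R,
    is_solution bE nuE dE dM dF K nu E M F ->
    inD (E 0) (M 0) (F 0) ->
    forall eps, 0 < eps -> exists T, forall t, T <= t ->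
      norm3 (E t) (M t) (F t) < eps.

Definition GAS0_in_D (bE nuE dE dM dF K nu : R) : Prop :=
  stable0_in_D bE nuE dE dM dF K nu /\ attractor0_in_D bE nuE dE dM dF K nu.

(* Write a = nuE + dE and b = nu * nuE; the condition R0 <= 1 reads
   bE * b <= dF * a.  The proof follows the classical Lyapunov route.
   1. Positivity: the squared negative parts w = min(E,0)^2 + min(F,0)^2
      satisfy w' <= C w (C depending on a bound for |F| on [0,t]), so the
      Gronwall argument gives w = 0; then M >= 0 by a linear comparison.
   2. The weighted population V = b E + a F is nonincreasing, because
      V' = -(dF a - bE b) F - (bE b / K) E F <= 0.
   3. V -> 0: if V stayed above L > 0, then F' >= (a+dF)(L/(a+dF) - F) forces
      F >= m > 0 eventually, and then V + theta F + rho s is nonincreasing for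
      suitable theta, rho > 0, contradicting V, F >= 0 for large s.
   4. M obeys M' = (1-nu) nuE E - dM M, so M is controlled by sup E. *)

From Stdlib Require Import Reals Lra Psatz Classical.
Open Scope R_scope.

Lemma right_cont0_limit (f : R -> R) :
  right_cont0 f <-> limit1_in f (fun x => 0 <= x) (f 0) 0.
Proof.
  unfold right_cont0, limit1_in, limit_in; simpl; unfold R_dist.
  split; intros H eps Heps; destruct (H eps Heps) as [d [Hd Hf]];
    exists d; split; auto; intros x [Hx Hxd]; apply Hf;
    rewrite ?Rminus_0_r, ?Rabs_right in *; lra.
Qed.

Lemma right_cont0_const (c : R) : right_cont0 (fun _ => c).
Proof. apply right_cont0_limit. exact (limit_free (fun _ => c) _ 0 0). Qed.

Lemma right_cont0_id : right_cont0 (fun x => x).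
Proof. apply right_cont0_limit, lim_x. Qed.

Lemma right_cont0_plus (f g : R -> R) :
  right_cont0 f -> right_cont0 g -> right_cont0 (fun x => f x + g x).
Proof. rewrite !right_cont0_limit. apply limit_plus. Qed.

Lemma right_cont0_mult (f g : R -> R) :
  right_cont0 f -> right_cont0 g -> right_cont0 (fun x => f x * g x).
Proof. rewrite !right_cont0_limit. apply limit_mul. Qed.

Lemma right_cont0_opp (f : R -> R) : right_cont0 f -> right_cont0 (fun x => - f x).
Proof. rewrite !right_cont0_limit. apply limit_Ropp. Qed.

Lemma right_cont0_comp (p f : R -> R) :
  continuity_pt p (f 0) -> right_cont0 f -> right_cont0 (fun x => p (f x)).
Proof.
  intros Hp Hf eps Heps. destruct (Hp eps Heps) as [d1 [Hd1 H1]].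
  destruct (Hf d1 Hd1) as [d [Hd H2]]. exists d; split; auto. intros t Ht.
  destruct (Req_dec (f t) (f 0)) as [Heq | Hne].
  - rewrite Heq, Rminus_diag, Rabs_R0; lra.
  - apply H1. repeat split; auto. apply H2; auto.
Qed.

Lemma right_cont0_exp_scal (k : R) : right_cont0 (fun x => exp (k * x)).
Proof.
  apply (right_cont0_comp exp (fun x => k * x)).
  - apply derivable_continuous_pt, derivable_pt_exp.
  - apply (right_cont0_mult (fun _ => k)); [apply right_cont0_const | apply right_cont0_id].
Qed.

Lemma derivable_pt_lim_exp_weight (k : R) (f : R -> R) (t l : R) :
  derivable_pt_lim f t l ->
  derivable_pt_lim (fun x => exp (k * x) * f x) t (exp (k * t) * (k * f t + l)).
Proof.
  intro Hf.
  replace (exp (k * t) * (k * f t + l)) with (exp (k * t) * k * f t + exp (k * t) * l)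
    by ring.
  apply (derivable_pt_lim_mult (fun x => exp (k * x)) f); [| exact Hf].
  replace (exp (k * t) * k) with (exp (k * t) * (k * 1)) by ring.
  apply (derivable_pt_lim_comp (fun x => k * x) exp t).
  - apply derivable_pt_lim_scal, derivable_pt_lim_id.
  - apply derivable_pt_lim_exp.
Qed.

Lemma nonincreasing_on_pos (G G' : R -> R) (a b : R) :
  0 < a <= b ->
  (forall t, a <= t <= b -> derivable_pt_lim G t (G' t)) ->
  (forall t, a < t < b -> G' t <= 0) -> G b <= G a.
Proof.
  intros Hab Hd Hneg. destruct (Req_dec a b) as [-> | Hne]; [lra |].
  destruct (MVT_cor2 G G' a b) as [c [Hc Hcab]]; [lra | auto |].
  assert (G' c <= 0) by (apply Hneg; lra). nra.
Qed.

(* The same conclusion down to a = 0, where only right-continuity of G is known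
   (solutions are only required to satisfy the ODE for t > 0). *)
Lemma nonincreasing (G G' : R -> R) (a b : R) :
  0 <= a <= b ->
  (forall t, 0 < t <= b -> derivable_pt_lim G t (G' t)) ->
  (forall t, a < t < b -> G' t <= 0) -> right_cont0 G -> G b <= G a.
Proof.
  intros Hab Hd Hneg Hrc.
  destruct (Req_dec a 0) as [Ha0 | Ha0];
    [| apply (nonincreasing_on_pos G G'); auto; [lra | intros; apply Hd; lra]].
  subst a. destruct (Req_dec b 0) as [-> | Hb0]; [lra |].
  apply Rnot_lt_le; intro Hlt.
  destruct (Hrc (G b - G 0)) as [d [Hd0 Hclose]]; [lra |].
  set (s := Rmin d b / 2).
  assert (Hs : 0 < s < d /\ s < b).
  { pose proof (Rmin_l d b). pose proof (Rmin_r d b).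
    assert (0 < Rmin d b) by (apply Rmin_pos; lra). unfold s; lra. }
  assert (G b <= G s)
    by (apply (nonincreasing_on_pos G G');
        [lra | intros; apply Hd; lra | intros; apply Hneg; lra]).
  assert (Rabs (G s - G 0) < G b - G 0) by (apply Hclose; lra).
  pose proof (Rle_abs (G s - G 0)). lra.
Qed.

Lemma exp_weighted_nonincreasing (y y' : R -> R) (k c a t : R) :
  0 <= a <= t ->
  (forall s, 0 < s <= t -> derivable_pt_lim y s (y' s)) ->
  (forall s, a < s < t -> y' s <= k * (c - y s)) ->
  right_cont0 y ->
  exp (k * t) * (y t - c) <= exp (k * a) * (y a - c).
Proof.
  intros Hat Hd Hineq Hrc.
  apply (nonincreasing (fun s => exp (k * s) * (y s - c))
                       (fun s => exp (k * s) * (k * (y s - c) + y' s))); auto.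
  - intros s Hs. apply (derivable_pt_lim_exp_weight k (fun x => y x - c)).
    replace (y' s) with (y' s - 0) by ring.
    apply (derivable_pt_lim_minus y (fun _ => c)); auto.
    apply derivable_pt_lim_const.
  - intros s Hs. pose proof (exp_pos (k * s)). pose proof (Hineq s Hs). nra.
  - apply right_cont0_mult; [apply right_cont0_exp_scal |].
    apply (right_cont0_plus y (fun _ => - c)); auto. apply right_cont0_const.
Qed.

Lemma eventually_below_of_exp_bound (x : R -> R) (k a C eta : R) :
  0 < k -> 0 < eta -> (forall t, a <= t -> exp (k * t) * x t <= C) ->
  exists T, a <= T /\ forall t, T <= t -> x t < eta.
Proof.
  intros Hk Heta Hbound.
  exists (Rmax a (Rabs C / (k * eta))). split; [apply Rmax_l |]. intros t Ht.
  pose proof (Rmax_l a (Rabs C / (k * eta))). pose proof (Rmax_r a (Rabs C / (k * eta))).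
  assert (Hkt : Rabs C <= k * eta * t).
  { replace (Rabs C) with (k * eta * (Rabs C / (k * eta))) by (field; nra).
    apply Rmult_le_compat_l; nra. }
  pose proof (exp_ineq1_le (k * t)). pose proof (Rle_abs C).
  pose proof (Hbound t ltac:(lra)). pose proof (exp_pos (k * t)).
  apply Rnot_le_lt; intro Hx.
  assert (exp (k * t) * eta <= exp (k * t) * x t) by (apply Rmult_le_compat_l; lra).
  nra.
Qed.

Lemma bounded_on_segment (f : R -> R) (t : R) :
  0 < t -> right_cont0 f -> (forall s, 0 < s -> continuity_pt f s) ->
  exists B, forall s, 0 <= s <= t -> Rabs (f s) <= B.
Proof.
  intros Ht Hrc Hc. destruct (Hrc 1) as [d [Hd Hnear]]; [lra |].
  pose proof (Rmin_l (d / 2) t). pose proof (Rmin_r (d / 2) t).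
  pose proof (Rmin_pos (d / 2) t ltac:(lra) Ht).
  set (s0 := Rmin (d / 2) t) in *.
  destruct (continuity_ab_maj f s0 t) as [smax [Hmax _]]; [lra | intros; apply Hc; lra |].
  destruct (continuity_ab_min f s0 t) as [smin [Hmin _]]; [lra | intros; apply Hc; lra |].
  exists (Rabs (f 0) + 1 + Rabs (f smax) + Rabs (f smin)). intros s Hs.
  pose proof (Rabs_pos (f 0)); pose proof (Rabs_pos (f smax)); pose proof (Rabs_pos (f smin)).
  pose proof (Rle_abs (f smax)); pose proof (Rle_abs (- f smin)).
  rewrite Rabs_Ropp in *.
  destruct (Rlt_dec s d) as [Hsd | Hsd].
  - pose proof (Hnear s (conj (proj1 Hs) Hsd)).
    pose proof (Rabs_triang_inv (f s) (f 0)). lra.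
  - pose proof (Hmax s ltac:(lra)); pose proof (Hmin s ltac:(lra)).
    apply Rabs_le; lra.
Qed.

Lemma norm3_le_sum (x y z : R) :
  0 <= x -> 0 <= y -> 0 <= z -> norm3 x y z <= x + y + z.
Proof.
  intros. unfold norm3. rewrite <- (sqrt_square (x + y + z)) by lra.
  apply sqrt_le_1_alt. nra.
Qed.

Lemma norm3_ge_components (x y z : R) :
  Rabs x <= norm3 x y z /\ Rabs y <= norm3 x y z /\ Rabs z <= norm3 x y z.
Proof.
  unfold norm3.
  repeat split; rewrite <- sqrt_Rsqr_abs; apply sqrt_le_1_alt; unfold Rsqr; nra.
Qed.

(* Squared negative part min(u,0)^2: a C^1 function vanishing exactly on
   [0,+oo), used to prove invariance of the nonnegative orthant. *)
Definition neg_sq (u : R) : R := Rmin u 0 * Rmin u 0.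

Lemma neg_sq_taylor (u h : R) :
  Rabs (neg_sq (u + h) - neg_sq u - 2 * Rmin u 0 * h) <= h * h.
Proof.
  unfold neg_sq. apply Rabs_le.
  destruct (Rle_dec u 0); destruct (Rle_dec (u + h) 0);
    [rewrite (Rmin_left u), (Rmin_left (u + h)) by lra
    |rewrite (Rmin_left u), (Rmin_right (u + h)) by lra
    |rewrite (Rmin_right u), (Rmin_left (u + h)) by lra
    |rewrite (Rmin_right u), (Rmin_right (u + h)) by lra]; split; nra.
Qed.

Lemma neg_sq_derivative (u : R) : derivable_pt_lim neg_sq u (2 * Rmin u 0).
Proof.
  intros eps Heps. exists (mkposreal eps Heps). simpl. intros h Hh Hlt.
  assert (Habs : 0 < Rabs h) by (apply Rabs_pos_lt; auto).
  replace ((neg_sq (u + h) - neg_sq u) / h - 2 * Rmin u 0)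
    with ((neg_sq (u + h) - neg_sq u - 2 * Rmin u 0 * h) / h) by (field; auto).
  unfold Rdiv. rewrite Rabs_mult, Rabs_inv.
  apply Rle_lt_trans with (Rabs h * Rabs h * / Rabs h).
  - apply Rmult_le_compat_r; [left; apply Rinv_0_lt_compat; auto |].
    rewrite <- Rabs_mult, (Rabs_right (h * h)); [apply neg_sq_taylor | nra].
  - field_simplify; lra.
Qed.

Lemma neg_sq_nonneg (u : R) : 0 <= neg_sq u.
Proof. apply Rle_0_sqr. Qed.

Lemma neg_sq_nonpos_iff (u : R) : neg_sq u <= 0 <-> 0 <= u.
Proof.
  unfold neg_sq. split; intro Hu.
  - apply Rnot_lt_le; intro Hlt. rewrite Rmin_left in Hu by lra. nra.
  - rewrite Rmin_right by lra. lra.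
Qed.

Local Ltac nonneg_product := repeat (apply Rle_0_sqr || apply Rmult_le_pos); lra.

Section Model.

Variables bE nuE dE dM dF K nu : R.
Hypotheses (HbE : 0 < bE) (HnuE : 0 < nuE) (HdE : 0 < dE) (HdM : 0 < dM)
  (HdF : 0 < dF) (HK : 0 < K) (Hnu : 0 < nu < 1).
Hypothesis Hthreshold : bE * (nu * nuE) <= dF * (nuE + dE).

(* Key algebraic estimate for positivity: along the (E,F) vector field, the
   derivative of neg_sq E + neg_sq F is at most C times itself, as soon as
   |F| <= B. *)
Lemma neg_sq_growth (e f B : R) :
  Rabs f <= B ->
  2 * Rmin e 0 * (bE * f * (1 - e / K) - (nuE + dE) * e)
    + 2 * Rmin f 0 * (nu * nuE * e - dF * f)
  <= (bE + nu * nuE + 2 * bE * B / K) * (neg_sq e + neg_sq f).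
Proof.
  intro HB. unfold neg_sq, Rdiv.
  pose proof (Rle_abs f); pose proof (Rle_abs (- f)). rewrite Rabs_Ropp in *.
  assert (Hk : 0 < / K) by (apply Rinv_0_lt_compat; lra).
  assert (Hb : 0 < nu * nuE) by nra.
  set (k := / K) in *. clearbody k.
  destruct (Rle_dec e 0); destruct (Rle_dec f 0);
    [rewrite (Rmin_left e), (Rmin_left f) by lra
    |rewrite (Rmin_left e), (Rmin_right f) by lra
    |rewrite (Rmin_right e), (Rmin_left f) by lra
    |rewrite (Rmin_right e), (Rmin_right f) by lra; lra].
  - assert (0 <= bE * ((e - f) * (e - f))) by nonneg_product.
    assert (0 <= nu * nuE * ((e - f) * (e - f))) by nonneg_product.
    assert (0 <= bE * k * ((B + f) * (e * e))) by nonneg_product.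
    assert (0 <= bE * k * (B * (f * f))) by nonneg_product.
    assert (0 <= (nuE + dE) * (e * e)) by nonneg_product.
    assert (0 <= dF * (f * f)) by nonneg_product.
    nra.
  - assert (0 <= bE * k * (f * (e * e))) by nonneg_product.
    assert (0 <= bE * (- e * f)) by nonneg_product.
    assert (0 <= bE * k * (B * (e * e))) by nonneg_product.
    assert (0 <= (bE + nu * nuE + (nuE + dE)) * (e * e)) by nonneg_product.
    nra.
  - assert (0 <= nu * nuE * (e * - f)) by nonneg_product.
    assert (0 <= bE * k * (B * (f * f))) by nonneg_product.
    assert (0 <= (bE + nu * nuE + dF) * (f * f)) by nonneg_product.
    nra.
Qed.

Definition lyap (E F : R -> R) (t : R) : R := nu * nuE * E t + (nuE + dE) * F t.

Section Solution.

Variables E M F : R -> R.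
Hypothesis Hsol : is_solution bE nuE dE dM dF K nu E M F.
Hypothesis Hinit : inD (E 0) (M 0) (F 0).

Let E_deriv s : 0 < s ->
  derivable_pt_lim E s (bE * F s * (1 - E s / K) - (nuE + dE) * E s).
Proof. intro Hs. apply (proj1 Hsol s Hs). Qed.

Let M_deriv s : 0 < s -> derivable_pt_lim M s ((1 - nu) * nuE * E s - dM * M s).
Proof. intro Hs. apply (proj1 Hsol s Hs). Qed.

Let F_deriv s : 0 < s -> derivable_pt_lim F s (nu * nuE * E s - dF * F s).
Proof. intro Hs. apply (proj1 Hsol s Hs). Qed.

Let E_rc : right_cont0 E.
Proof. apply Hsol. Qed.

Let M_rc : right_cont0 M.
Proof. apply Hsol. Qed.

Let F_rc : right_cont0 F.
Proof. apply Hsol. Qed.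

(* Invariance of D for the (E,F) subsystem, via the Gronwall inequality
   applied to the squared negative parts. *)
Lemma E_F_nonneg t : 0 <= t -> 0 <= E t /\ 0 <= F t.
Proof.
  intro Ht. destruct Hinit as [HE0 [_ HF0]].
  destruct (Req_dec t 0) as [-> | Ht0]; [auto |].
  destruct (bounded_on_segment F t) as [B HB]; [lra | exact F_rc | |].
  { intros s Hs. apply derivable_continuous_pt. eexists. exact (F_deriv s Hs). }
  set (w := fun s => neg_sq (E s) + neg_sq (F s)).
  set (C := bE + nu * nuE + 2 * bE * B / K).
  assert (Hw : exp (- C * t) * (w t - 0) <= exp (- C * 0) * (w 0 - 0)).
  { apply (exp_weighted_nonincreasing w (fun s =>
        2 * Rmin (E s) 0 * (bE * F s * (1 - E s / K) - (nuE + dE) * E s)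
        + 2 * Rmin (F s) 0 * (nu * nuE * E s - dF * F s))); [lra | | |].
    - intros s Hs.
      apply (derivable_pt_lim_plus (fun x => neg_sq (E x)) (fun x => neg_sq (F x)));
        apply (derivable_pt_lim_comp _ neg_sq);
        [apply E_deriv | apply neg_sq_derivative | apply F_deriv | apply neg_sq_derivative];
        lra.
    - intros s Hs. pose proof (neg_sq_growth (E s) (F s) B (HB s ltac:(lra))).
      unfold w, C in *. lra.
    - apply (right_cont0_plus (fun x => neg_sq (E x)) (fun x => neg_sq (F x)));
        apply right_cont0_comp; auto;
        apply derivable_continuous_pt; eexists; apply neg_sq_derivative. }
  pose proof (proj2 (neg_sq_nonpos_iff (E 0)) HE0).
  pose proof (proj2 (neg_sq_nonpos_iff (F 0)) HF0).
  pose proof (neg_sq_nonneg (E 0)). pose proof (neg_sq_nonneg (F 0)).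
  assert (Hw0 : w 0 = 0) by (unfold w; lra).
  rewrite Hw0, Rmult_0_r, exp_0 in Hw. pose proof (exp_pos (- C * t)).
  pose proof (neg_sq_nonneg (E t)); pose proof (neg_sq_nonneg (F t)).
  assert (w t <= 0) by nra. unfold w in *.
  split; apply neg_sq_nonpos_iff; lra.
Qed.

(* M stays nonnegative since its source term (1 - nu) nuE E is nonnegative. *)
Lemma M_nonneg t : 0 <= t -> 0 <= M t.
Proof.
  intro Ht. destruct Hinit as [_ [HM0 _]].
  assert (HM : exp (dM * t) * (- M t - 0) <= exp (dM * 0) * (- M 0 - 0)).
  { apply (exp_weighted_nonincreasing (fun s => - M s)
             (fun s => - ((1 - nu) * nuE * E s - dM * M s))); [lra | | |].
    - intros s Hs. apply derivable_pt_lim_opp, M_deriv. lra.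
    - intros s Hs. destruct (E_F_nonneg s) as [HE _]; [lra |].
      assert (0 <= (1 - nu) * nuE * E s)
        by (repeat apply Rmult_le_pos; lra).
      lra.
    - apply right_cont0_opp, M_rc. }
  rewrite Rmult_0_r, exp_0 in HM. pose proof (exp_pos (dM * t)). nra.
Qed.

Lemma M_compare (a c t : R) :
  0 <= a <= t -> (forall s, a < s -> (1 - nu) * nuE * E s <= dM * c) ->
  exp (dM * t) * (M t - c) <= exp (dM * a) * (M a - c).
Proof.
  intros Hat Hin.
  apply (exp_weighted_nonincreasing M (fun s => (1 - nu) * nuE * E s - dM * M s));
    auto.
  - intros s Hs. apply M_deriv. lra.
  - intros s Hs. pose proof (Hin s (proj1 Hs)). lra.
Qed.

(* V is nonincreasing: V' = -(dF a - bE b) F - (bE b / K) E F <= 0. *)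
Lemma lyap_nonincreasing (t1 t2 : R) : 0 <= t1 <= t2 -> lyap E F t2 <= lyap E F t1.
Proof.
  intro Ht. unfold lyap.
  apply (nonincreasing (fun s => nu * nuE * E s + (nuE + dE) * F s)
     (fun s => nu * nuE * (bE * F s * (1 - E s / K) - (nuE + dE) * E s)
          + (nuE + dE) * (nu * nuE * E s - dF * F s))); auto.
  - intros s Hs.
    apply (derivable_pt_lim_plus (fun s => nu * nuE * E s) (fun s => (nuE + dE) * F s));
      apply derivable_pt_lim_scal; [apply E_deriv | apply F_deriv]; lra.
  - intros s Hs. destruct (E_F_nonneg s) as [HE HF]; [lra |].
    assert (0 <= (dF * (nuE + dE) - bE * (nu * nuE)) * F s)
      by (apply Rmult_le_pos; lra).
    assert (0 <= bE * (nu * nuE) / K * (F s * E s))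
      by (repeat apply Rmult_le_pos; try apply Rlt_le, Rinv_0_lt_compat; nra).
    replace (nu * nuE * (bE * F s * (1 - E s / K) - (nuE + dE) * E s)
             + (nuE + dE) * (nu * nuE * E s - dF * F s))
      with (- ((dF * (nuE + dE) - bE * (nu * nuE)) * F s)
            - bE * (nu * nuE) / K * (F s * E s)) by (field; lra).
    lra.
  - apply (right_cont0_plus (fun s => nu * nuE * E s) (fun s => (nuE + dE) * F s));
      apply (right_cont0_mult (fun _ => _)); auto using right_cont0_const.
Qed.

Lemma F_eventually_large (L : R) :
  0 < L -> (forall s, 0 <= s -> L <= lyap E F s) ->
  exists T, 0 <= T /\ forall t, T <= t -> L / (2 * (nuE + dE + dF)) < F t.
Proof.
  intros HL Hlow. set (m := L / (nuE + dE + dF)).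
  assert (Hm : 0 < m) by (apply Rdiv_lt_0_compat; lra).
  assert (Hexp : forall t, 0 <= t -> exp ((nuE + dE + dF) * t) * (m - F t) <= m).
  { intros t Ht.
    assert (H : exp ((nuE + dE + dF) * t) * (- F t - - m)
                <= exp ((nuE + dE + dF) * 0) * (- F 0 - - m)).
    { apply (exp_weighted_nonincreasing (fun s => - F s)
               (fun s => - (nu * nuE * E s - dF * F s))); [lra | | |].
      - intros s Hs. apply derivable_pt_lim_opp, F_deriv. lra.
      - intros s Hs. pose proof (Hlow s ltac:(lra)). unfold lyap in *.
        assert ((nuE + dE + dF) * m = L) by (unfold m; field; lra). nra.
      - apply right_cont0_opp, F_rc. }
    rewrite Rmult_0_r, exp_0 in H. destruct Hinit as [_ [_ HF0]].
    replace (m - F t) with (- F t - - m) by ring. lra. }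
  destruct (eventually_below_of_exp_bound (fun t => m - F t) (nuE + dE + dF) 0 m (m / 2))
    as [T [HT HTbelow]]; [lra | lra | exact Hexp |].
  exists T. split; [exact HT |]. intros t Ht. pose proof (HTbelow t Ht).
  replace (L / (2 * (nuE + dE + dF))) with (m / 2) by (unfold m; field; lra). lra.
Qed.

Lemma lyap_drift (m T : R) :
  0 < m -> 0 <= T -> (forall t, T <= t -> m < F t) ->
  forall t, T <= t ->
  lyap E F t + bE * m / K * F t + bE * m / K * dF * m * t
  <= lyap E F T + bE * m / K * F T + bE * m / K * dF * m * T.
Proof.
  intros Hm HT HFT t Ht. unfold lyap.
  set (theta := bE * m / K).
  assert (Htheta : 0 < theta) by (apply Rdiv_lt_0_compat; nra).
  apply (nonincreasing
    (fun s => nu * nuE * E s + (nuE + dE) * F s + theta * F s + theta * dF * m * s)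
    (fun s => nu * nuE * (bE * F s * (1 - E s / K) - (nuE + dE) * E s)
              + (nuE + dE) * (nu * nuE * E s - dF * F s)
              + theta * (nu * nuE * E s - dF * F s) + theta * dF * m * 1)); [lra | | |].
  - intros s Hs.
    repeat apply derivable_pt_lim_plus; apply derivable_pt_lim_scal;
      [apply E_deriv | apply F_deriv | apply F_deriv | apply derivable_pt_lim_id]; lra.
  - intros s Hs. destruct (E_F_nonneg s) as [HE HF]; [lra |].
    pose proof (HFT s ltac:(lra)).
    assert (0 <= (dF * (nuE + dE) - bE * (nu * nuE)) * F s)
      by (apply Rmult_le_pos; lra).
    assert (0 <= bE * (nu * nuE) / K * ((F s - m) * E s))
      by (repeat apply Rmult_le_pos; try apply Rlt_le, Rinv_0_lt_compat; nra).
    assert (0 <= theta * dF * (F s - m))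
      by (apply Rmult_le_pos; [apply Rmult_le_pos |]; lra).
    replace (nu * nuE * (bE * F s * (1 - E s / K) - (nuE + dE) * E s)
             + (nuE + dE) * (nu * nuE * E s - dF * F s)
             + theta * (nu * nuE * E s - dF * F s) + theta * dF * m * 1)
      with (- ((dF * (nuE + dE) - bE * (nu * nuE)) * F s)
            - bE * (nu * nuE) / K * ((F s - m) * E s)
            - theta * dF * (F s - m)) by (unfold theta; field; lra).
    lra.
  - repeat apply right_cont0_plus;
      apply (right_cont0_mult (fun _ => _)); auto using right_cont0_const, right_cont0_id.
Qed.

(* V cannot stay above a positive level, by the linear drift above. *)
Lemma lyap_falls_below (L : R) : 0 < L -> exists T, 0 <= T /\ lyap E F T < L.
Proof.
  intro HL. apply NNPP; intro Hnever.
  assert (Hlow : forall s, 0 <= s -> L <= lyap E F s).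
  { intros s Hs. apply Rnot_lt_le; intro Hlt. apply Hnever. exists s; auto. }
  destruct (F_eventually_large L HL Hlow) as [T [HT HFT]].
  set (m := L / (2 * (nuE + dE + dF))) in *.
  assert (Hm : 0 < m) by (apply Rdiv_lt_0_compat; lra).
  pose proof (lyap_drift m T Hm HT HFT) as Hdrift.
  set (theta := bE * m / K) in *. set (rho := theta * dF * m) in *.
  assert (Htheta : 0 < theta) by (apply Rdiv_lt_0_compat; nra).
  assert (Hrho : 0 < rho) by (apply Rmult_lt_0_compat; [apply Rmult_lt_0_compat |]; lra).
  set (G0 := lyap E F T + theta * F T + rho * T) in *.
  set (t := T + Rabs G0 / rho + 1).
  assert (Hdiv : rho * (Rabs G0 / rho) = Rabs G0) by (field; lra).
  assert (0 <= Rabs G0 / rho)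
    by (apply Rmult_le_pos; [apply Rabs_pos | apply Rlt_le, Rinv_0_lt_compat; lra]).
  pose proof (Hdrift t ltac:(unfold t; lra)).
  destruct (E_F_nonneg t) as [HE HF]; [unfold t; lra |].
  pose proof (Rmult_le_pos (nu * nuE) (E t) ltac:(nra) HE).
  pose proof (Rmult_le_pos (nuE + dE) (F t) ltac:(lra) HF).
  pose proof (Rmult_le_pos theta (F t) ltac:(lra) HF).
  pose proof (Rle_abs G0). assert (0 <= rho * T) by (apply Rmult_le_pos; lra).
  unfold lyap, t in *. lra.
Qed.

Lemma lyap_eventually_small (L : R) :
  0 < L -> exists T, 0 <= T /\ forall t, T <= t -> lyap E F t < L.
Proof.
  intro HL. destruct (lyap_falls_below L HL) as [T [HT HVT]].
  exists T. split; [exact HT |]. intros t Ht.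
  pose proof (lyap_nonincreasing T t ltac:(lra)). lra.
Qed.

Lemma E_F_le_lyap t :
  0 <= t -> E t + F t <= lyap E F t / Rmin (nu * nuE) (nuE + dE).
Proof.
  intro Ht. destruct (E_F_nonneg t Ht) as [HE HF].
  pose proof (Rmin_l (nu * nuE) (nuE + dE)). pose proof (Rmin_r (nu * nuE) (nuE + dE)).
  assert (Hmin : 0 < Rmin (nu * nuE) (nuE + dE)) by (apply Rmin_pos; nra).
  apply Rmult_le_reg_l with (Rmin (nu * nuE) (nuE + dE)); [exact Hmin |].
  replace (Rmin (nu * nuE) (nuE + dE) * (lyap E F t / Rmin (nu * nuE) (nuE + dE)))
    with (lyap E F t) by (field; lra).
  unfold lyap. nra.
Qed.

Lemma solution_bound t :
  0 <= t ->
  norm3 (E t) (M t) (F t)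
  <= M 0 + (1 + (1 - nu) * nuE / dM) * (lyap E F 0 / Rmin (nu * nuE) (nuE + dE)).
Proof.
  intro Ht.
  set (q := (1 - nu) * nuE / dM). set (X := lyap E F 0 / Rmin (nu * nuE) (nuE + dE)).
  assert (Hq : 0 <= q)
    by (apply Rmult_le_pos; [apply Rmult_le_pos | apply Rlt_le, Rinv_0_lt_compat]; lra).
  assert (HEF : forall s, 0 <= s -> E s + F s <= X).
  { intros s Hs. eapply Rle_trans; [apply E_F_le_lyap; exact Hs |].
    apply Rmult_le_compat_r; [apply Rlt_le, Rinv_0_lt_compat, Rmin_pos; nra |].
    apply lyap_nonincreasing. lra. }
  assert (HM : M t <= M 0 + q * X).
  { assert (Hin : forall s, 0 < s -> (1 - nu) * nuE * E s <= dM * (M 0 + q * X)).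
    { intros s Hs. destruct (E_F_nonneg s) as [HE HF]; [lra |].
      pose proof (HEF s ltac:(lra)). destruct Hinit as [_ [HM0 _]].
      replace (dM * (M 0 + q * X)) with (dM * M 0 + (1 - nu) * nuE * X)
        by (unfold q; field; lra).
      assert (0 <= (1 - nu) * nuE) by (apply Rmult_le_pos; lra). nra. }
    pose proof (M_compare 0 (M 0 + q * X) t ltac:(lra) Hin) as Hcmp.
    rewrite Rmult_0_r, exp_0 in Hcmp. pose proof (exp_pos (dM * t)).
    pose proof (Rmult_le_pos q X Hq ltac:(pose proof (HEF 0 ltac:(lra));
                                           destruct (E_F_nonneg 0); lra)).
    nra. }
  destruct (E_F_nonneg t Ht) as [HE HF].
  eapply Rle_trans; [apply norm3_le_sum; auto using M_nonneg |].
  pose proof (HEF t Ht). lra.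
Qed.

Lemma solution_eventually_small (eps : R) :
  0 < eps -> exists T, forall t, T <= t -> norm3 (E t) (M t) (F t) < eps.
Proof.
  intro Heps.
  set (q := (1 - nu) * nuE / dM). set (smin := Rmin (nu * nuE) (nuE + dE)).
  assert (Hq : 0 <= q)
    by (apply Rmult_le_pos; [apply Rmult_le_pos | apply Rlt_le, Rinv_0_lt_compat]; lra).
  assert (Hsmin : 0 < smin) by (apply Rmin_pos; nra).
  set (eta := eps / (2 + q)).
  assert (Heta : 0 < eta) by (apply Rdiv_lt_0_compat; lra).
  destruct (lyap_eventually_small (eta * smin)) as [T0 [HT0 HlyapT0]];
    [apply Rmult_lt_0_compat; lra |].
  assert (HEF : forall t, T0 <= t -> E t + F t < eta).
  { intros t Ht. eapply Rle_lt_trans; [apply E_F_le_lyap; lra |].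
    apply Rmult_lt_reg_r with smin; [exact Hsmin |]. fold smin.
    replace (lyap E F t / smin * smin) with (lyap E F t) by (field; lra).
    apply HlyapT0, Ht. }
  assert (Hin : forall s, T0 < s -> (1 - nu) * nuE * E s <= dM * (q * eta)).
  { intros s Hs. destruct (E_F_nonneg s) as [HE HF]; [lra |].
    pose proof (HEF s ltac:(lra)).
    replace (dM * (q * eta)) with ((1 - nu) * nuE * eta) by (unfold q; field; lra).
    apply Rmult_le_compat_l; [apply Rmult_le_pos |]; lra. }
  destruct (eventually_below_of_exp_bound (fun t => M t - q * eta) dM T0
              (exp (dM * T0) * (M T0 - q * eta)) eta)
    as [T [HT HMT]]; [lra | lra | intros t Ht; apply M_compare; auto; lra |].
  exists T. intros t Ht.
  destruct (E_F_nonneg t) as [HE HF]; [lra |].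
  eapply Rle_lt_trans; [apply norm3_le_sum; auto; apply M_nonneg; lra |].
  pose proof (HEF t ltac:(lra)). pose proof (HMT t Ht).
  replace eps with ((2 + q) * eta) by (unfold eta; field; lra). nra.
Qed.
End Solution.

(* Stability follows from the a priori bound, which is linear in the data. *)
Lemma stability : stable0_in_D bE nuE dE dM dF K nu.
Proof.
  intros eps Heps.
  set (q := (1 - nu) * nuE / dM). set (smin := Rmin (nu * nuE) (nuE + dE)).
  assert (Hq : 0 <= q)
    by (apply Rmult_le_pos; [apply Rmult_le_pos | apply Rlt_le, Rinv_0_lt_compat]; lra).
  assert (Hsmin : 0 < smin) by (apply Rmin_pos; nra).
  set (Q := 1 + (1 + q) * (nu * nuE + (nuE + dE)) / smin).
  assert (HQ : 0 < Q).
  { assert (0 <= (1 + q) * (nu * nuE + (nuE + dE)) / smin)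
      by (apply Rmult_le_pos; [apply Rmult_le_pos | apply Rlt_le, Rinv_0_lt_compat]; nra).
    unfold Q. lra. }
  exists (eps / Q). split; [apply Rdiv_lt_0_compat; lra |].
  intros E M F Hsol Hinit Hsmall t Ht.
  destruct (norm3_ge_components (E 0) (M 0) (F 0)) as [HE0 [HM0 HF0]].
  pose proof Hinit as [HE0p [HM0p HF0p]].
  rewrite Rabs_right in HE0, HM0, HF0 by lra.
  assert (Hlyap0 : lyap E F 0 / smin < (nu * nuE + (nuE + dE)) * (eps / Q) / smin).
  { apply Rmult_lt_compat_r; [apply Rinv_0_lt_compat; lra |]. unfold lyap.
    assert (Hb : 0 < nu * nuE) by nra.
    pose proof (Rmult_lt_compat_l (nu * nuE) (E 0) (eps / Q) Hb ltac:(lra)).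
    pose proof (Rmult_lt_compat_l (nuE + dE) (F 0) (eps / Q) ltac:(lra) ltac:(lra)).
    lra. }
  eapply Rle_lt_trans; [apply (solution_bound E M F Hsol Hinit); lra |].
  fold q smin.
  assert (Hsplit : eps / Q + (1 + q) * ((nu * nuE + (nuE + dE)) * (eps / Q) / smin) = eps).
  { unfold Q. field. split; [lra |].
    pose proof (Rmult_le_pos (1 + q) (nu * nuE + (nuE + dE)) ltac:(lra) ltac:(nra)). lra. }
  pose proof (Rmult_lt_compat_l (1 + q) _ _ ltac:(lra) Hlyap0). lra.
Qed.

Lemma attractivity : attractor0_in_D bE nuE dE dM dF K nu.
Proof.
  intros E M F Hsol Hinit. exact (solution_eventually_small E M F Hsol Hinit).
Qed.
End Model.

Lemma threshold_of_R0 (bE nuE dE dF nu : R) :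
  0 < dF -> 0 < nuE -> 0 < dE ->
  basic_offspring bE nuE dE dF nu <= 1 -> bE * (nu * nuE) <= dF * (nuE + dE).
Proof.
  unfold basic_offspring. intros HdF HnuE HdE HR0.
  assert (Hden : 0 < dF * (nuE + dE)) by nra.
  replace (bE * (nu * nuE)) with (bE * nu * nuE / (dF * (nuE + dE)) * (dF * (nuE + dE)))
    by (field; lra).
  nra.
Qed.

Theorem theorem1 (bE nuE dE dM dF K nu : R)
  (HbE : 0 < bE) (HnuE : 0 < nuE) (HdE : 0 < dE) (HdM : 0 < dM)
  (HdF : 0 < dF) (HK : 0 < K) (Hnu : 0 < nu < 1)
  (HR0 : basic_offspring bE nuE dE dF nu <= 1) :
  GAS0_in_D bE nuE dE dM dF K nu.
Proof.
  pose proof (threshold_of_R0 bE nuE dE dF nu HdF HnuE HdE HR0) as Hthreshold.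
  split.
  - exact (stability bE nuE dE dM dF K nu HbE HnuE HdE HdM HdF HK Hnu Hthreshold).
  - exact (attractivity bE nuE dE dM dF K nu HbE HnuE HdE HdM HdF HK Hnu Hthreshold).
Qed.
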